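(* Let $K\in\mathbb N$, let $(p_0,\dots,p_K)$ be a probability vector with all $p_j>0$, and for $u\in[0,1)$ and $j\in\{0,\dots,K\}$ let $a_j(u),b_j(u)$ satisfy $0\le a_j(u)\le a_j(u)+b_j(u)\le1$ with $j\mapsto(a_j(u),b_j(u))$ injective for each $u$; let $S_j(u)x=a_j(u)+b_j(u)x$. Assume moreover that for every $z\in[0,1]$ and every $i$, the function $u\mapsto S_i(u)z$ is right-continuous and nondecreasing on $[0,1)$, and that $\Theta_0:[0,1)\to[0,1]$ is right-continuous and nondecreasing. Let $(B_t)_{t\in\mathbb N}$ be IID with $P(B_1=j)=p_j$, define $\Theta_t(u)=a_{B_t}(u)+b_{B_t}(u)\Theta_{t-1}(u)$ for $u\in[0,1)$, $t\ge1$, and extend each $\Theta_t$ to a CDF on $\mathbb R$ by $\Theta_t(u)=0$ for $u<0$ and $\Theta_t(u)=1$ for $u\ge1$. Let $N_{t,j}=|\{1\le s\le t:B_s=j\}|$. Then the distribution of the random CDFs $\Theta_t(\cdot)$ converges as $t\to\infty$ to the distribution of the random CDF $$\tilde\Theta_\infty(u)=\begin{cases}0,&u<0,\\ \sum_{s=1}^\infty a_{B_s}(u)\prod_{i=0}^K b_i^{N_{s-1,i}}(u),&u\in[0,1),\\ 1,&u\ge1.\end{cases}$$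
   Context: Convention: $0^0=1$. *)

From HB Require Import structures.
From mathcomp Require Import all_boot all_order all_algebra.
From mathcomp Require Import all_classical all_reals all_analysis.
Set Implicit Arguments. Unset Strict Implicit. Unset Printing Implicit Defensive.
Import Order.TTheory GRing.Theory Num.Theory.
Import numFieldNormedType.Exports.
Local Open Scope classical_set_scope.
Local Open Scope ring_scope.

(* Indexing convention: the paper's B_t (t = 1,2,...) is [B (t-1)] here,
   i.e. B : nat -> Omega -> 'I_K.+1 and B s is the paper's B_{s+1}. *)

Definition iid_seq {R : realType} {d : measure_display} {Omega : measurableType d}
  (P : probability Omega R) (K : nat) (B : nat -> Omega -> 'I_K.+1)
  (p : 'I_K.+1 -> R) : Prop :=
  (forall n j, measurable [set w | B n w = j]) /\
  (forall (s : seq nat) (v : nat -> 'I_K.+1), uniq s ->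
     P [set w | forall i, i \in s -> B i w = v i] = (\prod_(i <- s) p (v i))%:E).

Fixpoint theta_iter {R : realType} {Omega : Type} {K : nat}
  (a b : 'I_K.+1 -> R -> R) (th0 : R -> R) (B : nat -> Omega -> 'I_K.+1)
  (t : nat) (w : Omega) (u : R) : R :=
  match t with
  | 0 => th0 u
  | t'.+1 => a (B t' w) u + b (B t' w) u * theta_iter a b th0 B t' w u
  end.

Definition Theta {R : realType} {Omega : Type} {K : nat}
  (a b : 'I_K.+1 -> R -> R) (th0 : R -> R) (B : nat -> Omega -> 'I_K.+1)
  (t : nat) (w : Omega) (u : R) : R :=
  if u < 0 then 0 else if 1 <= u then 1 else theta_iter a b th0 B t w u.

Definition Ncount {Omega : Type} {K : nat} (B : nat -> Omega -> 'I_K.+1)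
  (t : nat) (i : 'I_K.+1) (w : Omega) : nat :=
  \sum_(r < t) (B r w == i).

Definition ThetaInf {R : realType} {Omega : Type} {K : nat}
  (a b : 'I_K.+1 -> R -> R) (B : nat -> Omega -> 'I_K.+1)
  (w : Omega) (u : R) : R :=
  if u < 0 then 0 else if 1 <= u then 1 else
  limn (series (fun r => a (B r w) u * \prod_(i < K.+1) b i u ^+ Ncount B r i w)).

(* Convergence in distribution of random functions R -> R (product topology),
   i.e. convergence of all finite-dimensional distributions: for every finite
   family of points, E f(X_t(u_1),...,X_t(u_n)) -> E f(X(u_1),...,X(u_n)) for
   every bounded continuous f. *)
Definition fidi_cvg_dist {R : realType} {d : measure_display}
  {Omega : measurableType d} (P : probability Omega R)
  (X : nat -> Omega -> R -> R) (Y : Omega -> R -> R) : Prop :=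
  forall (n : nat) (us : 'I_n -> R) (f : 'rV[R]_n -> R),
    continuous f -> (exists M : R, forall x, `|f x| <= M) ->
    (fun t => (\int[P]_w (f (\row_k X t w (us k)))%:E)%E) @ \oo -->
      (\int[P]_w (f (\row_k Y w (us k)))%:E)%E.

From HB Require Import structures.
From mathcomp Require Import all_boot all_order all_algebra.
From mathcomp Require Import all_classical all_reals all_analysis.
From mathcomp Require Import measurable_realfun.
Import Order.TTheory GRing.Theory Num.Theory.
Import numFieldNormedType.Exports.
Local Open Scope classical_set_scope.
Local Open Scope ring_scope.
Set Implicit Arguments. Unset Strict Implicit. Unset Printing Implicit Defensive.

(* Unfolding the recursion, Theta_t(u) = S_{B_t} o ... o S_{B_1} (Theta_0 u).
   Since (B_1, ..., B_t) and (B_t, ..., B_1) have the same law, Theta_t has the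
   law of the forward composition S_{B_1} o ... o S_{B_t} (Theta_0 u), which equals
     sum_{s <= t} a_{B_s}(u) prod_{r < s} b_{B_r}(u) + prod_{r <= t} b_{B_r}(u) Theta_0(u).
   Almost surely every index occurs infinitely often, and by injectivity at most
   one index has (a_j(u), b_j(u)) = (0, 1), so some b_j(u) < 1 and the product
   tends to 0: the forward composition converges pointwise to tilde Theta_infty.
   Bounded convergence then gives E f(Theta_t(u_1), ..., Theta_t(u_n)) ->
   E f(tilde Theta_infty(u_1), ...) for every bounded continuous f. *)

Section Prefix.
Variables (Omega : Type) (K : nat) (B : nat -> Omega -> 'I_K.+1).

Lemma prefix_tuple_subproof t w : size [seq B i w | i <- iota 0 t] == t.
Proof. by rewrite size_map size_iota. Qed.

Definition prefix_tuple t w : t.-tuple 'I_K.+1 := Tuple (prefix_tuple_subproof t w).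

Lemma nth_prefix_tuple t w i : (i < t)%N -> nth ord0 (prefix_tuple t w) i = B i w.
Proof. by move=> it; rewrite /= (nth_map 0) ?size_iota // nth_iota. Qed.

Lemma prefix_tuple_eqP t w (v : t.-tuple 'I_K.+1) :
  prefix_tuple t w = v <-> (forall i, i \in iota 0 t -> B i w = nth ord0 v i).
Proof.
split=> [<- i|Bv].
  by rewrite mem_iota => /andP[_ it]; rewrite nth_prefix_tuple.
apply: val_inj; apply: (@eq_from_nth _ ord0); first by rewrite !size_tuple.
move=> i; rewrite size_tuple => it.
by rewrite nth_prefix_tuple // Bv // mem_iota.
Qed.

Lemma prefix_tupleS t w :
  val (prefix_tuple t.+1 w) = rcons (prefix_tuple t w) (B t w).
Proof.
change ([seq B i w | i <- iota 0 t.+1] = rcons [seq B i w | i <- iota 0 t] (B t w)).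
by rewrite -[t.+1]addn1 iotaD map_cat cats1.
Qed.

Definition each_value_io w :=
  forall (j : 'I_K.+1) N, exists2 s, (N <= s)%N & B s w = j.

Definition pattern_event (s1 : seq nat) (v : nat -> 'I_K.+1) (s2 : seq nat)
    (Q : pred 'I_K.+1) :=
  [set w | (forall i, i \in s1 -> B i w = v i) /\ (forall i, i \in s2 -> Q (B i w))].

Lemma pattern_event_cons s1 v x s2 Q : x \notin s1 ->
  pattern_event s1 v (x :: s2) Q =
  \big[setU/set0]_(y < K.+1 | Q y)
    pattern_event (x :: s1) (fun i => if i == x then y else v i) s2 Q.
Proof.
move=> xs1; rewrite -bigcup_seq_cond; apply/seteqP; split => w /=.
- move=> [Bv BQ]; exists (B x w); first by rewrite /= mem_index_enum BQ ?mem_head.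
  split=> [i|i is2]; last by rewrite BQ // in_cons is2 orbT.
  by rewrite in_cons; case: eqP => [->|_ /= /Bv].
- move=> [y /andP[_ Qy] [Bv BQ]]; split=> [i is1|i].
    have := Bv i; rewrite in_cons is1 orbT => /(_ isT).
    by case: eqP => // ix; move: xs1; rewrite -ix is1.
  rewrite in_cons => /orP[/eqP ->|/BQ //].
  by have := Bv x; rewrite mem_head eqxx => /(_ isT) ->.
Qed.

End Prefix.

Lemma prod_exp_Ncount (R : comPzSemiRingType) (Omega : Type) (K : nat)
    (B : nat -> Omega -> 'I_K.+1) (F : 'I_K.+1 -> R) r w :
  \prod_(i < K.+1) F i ^+ Ncount B r i w = \prod_(s < r) F (B s w).
Proof.
elim: r => [|r IH].
  by rewrite big_ord0 big1 // => i _; rewrite /Ncount big_ord0.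
rewrite [RHS]big_ord_recr /= -IH /Ncount.
under eq_bigr do rewrite big_ord_recr exprD.
rewrite big_split /=; congr (_ * _).
rewrite (bigD1 (B r w)) //= eqxx big1 ?mulr1 // => i /negbTE.
by rewrite eq_sym => ->.
Qed.

Section AffineComposition.
Variables (R : comPzRingType) (K : nat) (a b : 'I_K.+1 -> R -> R).

Definition Scomp (s : seq 'I_K.+1) u x := foldr (fun j y => a j u + b j u * y) x s.

Lemma Scomp_prefix (Omega : Type) (B : nat -> Omega -> 'I_K.+1) t w u x :
  Scomp (prefix_tuple B t w) u x =
  series (fun r => a (B r w) u * \prod_(s < r) b (B s w) u) t
  + \prod_(s < t) b (B s w) u * x.
Proof.
elim: t x => [|t IH] x; first by rewrite seriesEord /= !big_ord0 add0r mul1r.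
rewrite /Scomp prefix_tupleS foldr_rcons -/(Scomp _ _ _) IH.
rewrite seriesSr big_ord_recr /=.
by rewrite mulrDr mulrA -!addrA [a _ _ * _]mulrC.
Qed.

End AffineComposition.

Lemma theta_iter_prefix (R : realType) (Omega : Type) (K : nat)
    (a b : 'I_K.+1 -> R -> R) th0 (B : nat -> Omega -> 'I_K.+1) t w u :
  theta_iter a b th0 B t w u = Scomp a b (rev (prefix_tuple B t w)) u (th0 u).
Proof. by elim: t => [//|t IH]; rewrite prefix_tupleS rev_rcons /= IH. Qed.

Section Contraction.
Variables (R : realType) (K : nat) (a b : 'I_K.+1 -> R -> R) (u : R).
Hypothesis hab :
  forall j, 0 <= a j u /\ a j u <= a j u + b j u /\ a j u + b j u <= 1.

Let a_ge0 j : 0 <= a j u. Proof. by case: (hab j). Qed.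
Let b_ge0 j : 0 <= b j u. Proof. by case: (hab j) => _ [+ _]; rewrite lerDl. Qed.
Let ab_le1 j : a j u + b j u <= 1. Proof. by case: (hab j) => _ []. Qed.
Let b_le1 j : b j u <= 1. Proof. by apply: le_trans (ab_le1 j); rewrite lerDr. Qed.

Lemma exists_b_lt1 : (1 <= K)%N -> injective (fun j => (a j u, b j u)) ->
  exists j, b j u < 1.
Proof.
move=> K_ge1 ab_inj.
have ab01 j : ~~ (b j u < 1) -> (a j u, b j u) = (0, 1).
  rewrite -leNgt => b_ge1; have b1 : b j u = 1 by apply/eqP; rewrite eq_le b_le1.
  have := ab_le1 j; rewrite b1 => a_le0.
  by congr (_, _); apply/eqP; rewrite eq_le a_ge0 andbT -(lerD2r 1) add0r.
have [b0|/ab01 ab0] := boolP (b ord0 u < 1); first by exists ord0.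
have [bK|/ab01 abK] := boolP (b ord_max u < 1); first by exists ord_max.
have /(congr1 val) /= K0 := ab_inj ord0 ord_max (etrans ab0 (esym abK)).
by rewrite -K0 in K_ge1.
Qed.

Section Path.
Variables (Omega : Type) (B : nat -> Omega -> 'I_K.+1) (w : Omega).

Let q t := \prod_(s < t) b (B s w) u.
Let term r := a (B r w) u * \prod_(s < r) b (B s w) u.

Let q_ge0 t : 0 <= q t. Proof. exact: prodr_ge0. Qed.

Lemma series_add_prod_le1 t : series term t + q t <= 1.
Proof.
elim: t => [|t IH]; first by rewrite seriesEord /= big_ord0 add0r /q big_ord0.
rewrite seriesSr /term /q big_ord_recr /= -/(q t) -addrA; apply: le_trans IH.
by rewrite lerD2l mulrC -mulrDr ler_piMr.
Qed.

Lemma cvgn_ThetaInf_series : cvgn (series term).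
Proof.
apply: nondecreasing_is_cvgn.
  by apply/nondecreasing_seqP => n; rewrite seriesSr lerDl mulr_ge0 ?prodr_ge0.
exists 1 => _ [n _ <-]; apply: le_trans (series_add_prod_le1 n).
by rewrite lerDl.
Qed.

Lemma prod_b_cvg0 j : b j u < 1 -> (forall N, exists2 s, (N <= s)%N & B s w = j) ->
  \prod_(s < t) b (B s w) u @[t --> \oo] --> 0.
Proof.
move=> bj_lt1 j_io.
have qS t : q t.+1 = q t * b (B t w) u by rewrite /q big_ord_recr.
have q_noninc : nonincreasing_seq q.
  by apply/nonincreasing_seqP => t; rewrite qS ler_piMr.
have q_le m : exists N, forall t, (N <= t)%N -> q t <= b j u ^+ m.
  elim: m => [|m [N qN]].
    by exists 0%N => t _; rewrite expr0 prodr_ile1 // => s _; rewrite b_ge0 b_le1.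
  have [s Ns Bs] := j_io N; exists s.+1 => t st.
  apply: le_trans (q_noninc _ _ st) _; rewrite qS Bs exprSr.
  by rewrite ler_wpM2r ?qN.
apply/cvgrPdist_lt => e e_gt0.
have [M _ bM] : \forall m \near \oo, b j u ^+ m < e.
  have bj_norm : `|b j u| < 1 by rewrite ger0_norm.
  by move: (cvg_expr bj_norm) => /cvgr_lt /(_ e e_gt0).
have [N qN] := q_le M; exists N => // t /= Nt.
rewrite sub0r normrN ger0_norm ?prodr_ge0 //.
exact: le_lt_trans (qN t Nt) (bM M (leqnn M)).
Qed.

Lemma Scomp_prefix_cvg x : q t * x @[t --> \oo] --> 0 ->
  Scomp a b (prefix_tuple B t w) u x @[t --> \oo] --> limn (series term).
Proof.
move=> qx0; rewrite -[limn _]addr0.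
have -> : (fun t => Scomp a b (prefix_tuple B t w) u x) =
    series term \+ (fun t => q t * x).
  by apply/funext => t; rewrite Scomp_prefix.
exact: cvgD cvgn_ThetaInf_series qx0.
Qed.

End Path.
End Contraction.

Definition cdf_ext (R : realType) (g : R -> R) u : R :=
  if u < 0 then 0 else if 1 <= u then 1 else g u.

Lemma cvg_cdf_ext (R : realType) (g_ : nat -> R -> R) g u :
  (0 <= u < 1 -> g_ ^~ u @ \oo --> g u) -> cdf_ext (g_ t) u @[t --> \oo] --> cdf_ext g u.
Proof.
move=> g_cvg; rewrite /cdf_ext.
have [_|u_ge0] := ltP u 0; first exact: cvg_cst.
have [_|u_lt1] := leP 1 u; first exact: cvg_cst.
by apply: g_cvg; rewrite u_ge0.
Qed.

Section ThetaInfLimit.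
Variables (R : realType) (K : nat) (a b : 'I_K.+1 -> R -> R).
Hypothesis hab : forall u, 0 <= u < 1 -> forall j,
  0 <= a j u /\ a j u <= a j u + b j u /\ a j u + b j u <= 1.
Variables (Omega : Type) (B : nat -> Omega -> 'I_K.+1) (w : Omega).

Let cdf_Scomp_prefix_cvg (x : R -> R) u :
  (forall u, 0 <= u < 1 -> (\prod_(s < t) b (B s w) u) * x u @[t --> \oo] --> 0) ->
  cdf_ext (fun u => Scomp a b (prefix_tuple B t w) u (x u)) u @[t --> \oo] -->
  ThetaInf a b B w u.
Proof.
move=> qx0; have -> : ThetaInf a b B w u = cdf_ext (fun u =>
    limn (series (fun r => a (B r w) u * \prod_(s < r) b (B s w) u))) u.
  by rewrite /ThetaInf /cdf_ext; under eq_fun do rewrite prod_exp_Ncount.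
by apply: cvg_cdf_ext => u01; apply: Scomp_prefix_cvg; [exact: hab | exact: qx0].
Qed.

Lemma Scomp0_prefix_cvg u :
  cdf_ext (fun u => Scomp a b (prefix_tuple B t w) u 0) u @[t --> \oo] -->
  ThetaInf a b B w u.
Proof.
apply: (@cdf_Scomp_prefix_cvg (fun=> 0)) => v _.
by under eq_fun do rewrite mulr0; exact: cvg_cst.
Qed.

Lemma Scomp_prefix_cvg_io (K_ge1 : (1 <= K)%N)
    (hinj : forall u, 0 <= u < 1 -> injective (fun j => (a j u, b j u)))
    (x : R -> R) u : each_value_io B w ->
  cdf_ext (fun u => Scomp a b (prefix_tuple B t w) u (x u)) u @[t --> \oo] -->
  ThetaInf a b B w u.
Proof.
move=> w_io; apply: cdf_Scomp_prefix_cvg => v v01.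
have [j bj_lt1] := exists_b_lt1 (hab v01) K_ge1 (hinj v v01).
rewrite -(mul0r (x v)); apply: cvgMr_tmp.
exact: (@prod_b_cvg0 _ _ _ _ _ (hab v01) _ _ _ _ bj_lt1 (w_io j)).
Qed.

End ThetaInfLimit.

Section IID.
Variables (R : realType) (d : measure_display) (Omega : measurableType d)
  (P : probability Omega R) (K : nat) (B : nat -> Omega -> 'I_K.+1)
  (p : 'I_K.+1 -> R).
Hypothesis hB : iid_seq P B p.

Lemma measurable_prefix_eq t v : measurable [set w | prefix_tuple B t w = v].
Proof.
have -> : [set w | prefix_tuple B t w = v] =
    \bigcap_(i in [set i | i \in iota 0 t]) [set w | B i w = nth ord0 v i].
  by apply/seteqP; split => w /prefix_tuple_eqP.
by apply: bigcap_measurableType => i _; apply: hB.1.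
Qed.

Lemma prob_prefix_eq t v :
  P [set w | prefix_tuple B t w = v] = (\prod_(x <- v) p x)%:E.
Proof.
have -> : [set w | prefix_tuple B t w = v] =
    [set w | forall i, i \in iota 0 t -> B i w = nth ord0 v i].
  by apply/seteqP; split => w /prefix_tuple_eqP.
rewrite (hB.2 _ _ (iota_uniq 0 t)) (big_nth ord0) size_tuple.
by rewrite /index_iota subn0.
Qed.

Lemma measurable_fun_prefix t (H : t.-tuple 'I_K.+1 -> R) :
  measurable_fun setT (fun w => H (prefix_tuple B t w)).
Proof.
move=> _ Y mY; rewrite setTI.
have -> : (fun w => H (prefix_tuple B t w)) @^-1` Y =
    \bigcup_(v in H @^-1` Y) [set w | prefix_tuple B t w = v].
  apply/seteqP; split => [w Yw|w [v Yv /= wv]]; last by rewrite /= wv.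
  by exists (prefix_tuple B t w).
apply: fin_bigcup_measurable; first exact: finite_finset.
by move=> v _; apply: measurable_prefix_eq.
Qed.

Lemma integral_prefix t (H : t.-tuple 'I_K.+1 -> R) :
  (\int[P]_w (H (prefix_tuple B t w))%:E =
   (\sum_(v : t.-tuple 'I_K.+1) H v * \prod_(x <- v) p x)%:E)%E.
Proof.
have HE w : (H (prefix_tuple B t w))%:E =
    (\sum_(v : t.-tuple 'I_K.+1)
       (H v)%:E * (\1_[set w | prefix_tuple B t w = v] w)%:E)%E.
  rewrite (bigD1 (prefix_tuple B t w)) //= indicE mem_set // mule1 big1 ?adde0 //.
  by move=> v /negbTE vN; rewrite indicE memNset ?mule0 //= => wv; rewrite wv eqxx in vN.
under eq_integral do rewrite HE.
rewrite integral_sum //; last first.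
  move=> v; apply: integrableZl => //.
  by apply: integrable_indic; apply: measurable_prefix_eq.
rewrite -sumEFin; apply: eq_bigr => v _.
rewrite integralZl //; last by apply: integrable_indic; apply: measurable_prefix_eq.
rewrite integral_indic //; last exact: measurable_prefix_eq.
by rewrite setIT EFinM -prob_prefix_eq.
Qed.

Lemma integral_prefix_rev t (H : t.-tuple 'I_K.+1 -> R) :
  (\int[P]_w (H (rev_tuple (prefix_tuple B t w)))%:E =
   \int[P]_w (H (prefix_tuple B t w))%:E)%E.
Proof.
have revK : involutive (@rev_tuple t 'I_K.+1).
  by move=> v; apply: val_inj; rewrite /= revK.
rewrite (integral_prefix (H \o @rev_tuple _ _)) integral_prefix.
rewrite (reindex_inj (inv_inj revK)) /=; congr EFin; apply: eq_bigr => v _.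
by rewrite revK big_rev.
Qed.

Lemma integral_Theta_prefix (a b : 'I_K.+1 -> R -> R) th0 (G : (R -> R) -> R) t :
  (\int[P]_w (G (Theta a b th0 B t w))%:E =
   \int[P]_w (G (cdf_ext (fun u => Scomp a b (prefix_tuple B t w) u (th0 u))))%:E)%E.
Proof.
pose H (v : t.-tuple 'I_K.+1) := G (cdf_ext (fun u => Scomp a b v u (th0 u))).
rewrite -(integral_prefix_rev H); apply: eq_integral => w _; congr (EFin (G _)).
by apply/funext => u; rewrite /Theta theta_iter_prefix.
Qed.

Lemma measurable_pattern_event s1 v s2 Q : measurable (pattern_event B s1 v s2 Q).
Proof.
have mBQ i : measurable [set w | Q (B i w)].
  have -> : [set w | Q (B i w)] = \bigcup_(y in [set y | Q y]) [set w | B i w = y].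
    by apply/seteqP; split => [w|w [y /= Qy ->]] //=; exists (B i w).
  by apply: fin_bigcup_measurable; [exact: finite_finset | move=> y _; apply: hB.1].
have -> : pattern_event B s1 v s2 Q =
    \bigcap_(i in [set i | i \in s1]) [set w | B i w = v i] `&`
    \bigcap_(i in [set i | i \in s2]) [set w | Q (B i w)].
  by apply/seteqP; split => w [Bv BQ]; split => i /= ?; by [apply: Bv | apply: BQ].
by apply: measurableI; apply: bigcap_measurableType => i _; [apply: hB.1 | apply: mBQ].
Qed.

Lemma prob_pattern_event Q s2 s1 v : uniq (s1 ++ s2) ->
  P (pattern_event B s1 v s2 Q) =
  ((\prod_(i <- s1) p (v i)) * (\sum_(y | Q y) p y) ^+ size s2)%:E.
Proof.
elim: s2 s1 v => [|x s2 IH] s1 v.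
  rewrite cats0 expr0 mulr1 => s1_uniq; rewrite -(proj2 hB s1 v s1_uniq).
  by congr (P _); apply/seteqP; split => [w [] //|w Bv]; split.
rewrite -cat1s uniq_catCA cat1s => xs_uniq.
have xs1 : x \notin s1.
  by move: xs_uniq; rewrite cons_uniq mem_cat negb_or => /andP[/andP[]].
pose vy y i := if i == x then y else v i.
have vyE y : \prod_(i <- s1) p (vy y i) = \prod_(i <- s1) p (v i).
  rewrite big_seq_cond [RHS]big_seq_cond; apply: eq_bigr => i /andP[is1 _].
  by rewrite /vy; case: eqP => // ix; rewrite -ix is1 in xs1.
rewrite pattern_event_cons // measure_bigsetU_ord_cond; last 2 first.
- by move=> y _; apply: measurable_pattern_event.
- move=> y z _ _ [w [[By _] [Bz _]]].
  by have := By x (mem_head _ _); rewrite (Bz x (mem_head _ _)) /vy (eqxx x) => ->.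
rewrite (eq_bigr (fun y =>
    (p y * \prod_(i <- s1) p (v i) * (\sum_(y | Q y) p y) ^+ size s2)%:E)).
  by rewrite sumEFin -!big_distrl /= exprS mulrCA mulrA.
move=> y _; have vyx : vy y x = y by rewrite /vy (eqxx x).
by apply: etrans (IH (x :: s1) (vy y) xs_uniq) _; rewrite big_cons vyx vyE.
Qed.

Hypothesis hp_pos : forall j, 0 < p j.
Hypothesis hp_sum : \sum_(j < K.+1) p j = 1.

Lemma negligible_never_after j N :
  P.-negligible [set w | forall s, (N <= s)%N -> B s w != j].
Proof.
set A := [set w | _].
have mA : measurable A.
  have -> : A = \bigcap_(s in [set s | (N <= s)%N]) ~` [set w | B s w = j].
    by apply/seteqP; split => w /= Aw s /Aw /eqP.
  by apply: bigcap_measurableType => s _; apply: measurableC; apply: hB.1.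
have sum_neq_j : \sum_(y | predC1 j y) p y = 1 - p j.
  by rewrite -hp_sum [in RHS](bigD1 j) //= addrC addrK.
have PA_le m : (P A <= ((1 - p j) ^+ m)%:E)%E.
  have := @prob_pattern_event (predC1 j) (iota N m) [::] (fun=> j) (iota_uniq N m).
  rewrite big_nil mul1r size_iota sum_neq_j => <-; apply: le_measure.
  - exact/mem_set.
  - exact/mem_set/measurable_pattern_event.
  - by move=> w Aw; split => // s; rewrite mem_iota => /andP[/Aw].
have pj_le1 : p j <= 1.
  by rewrite -hp_sum (bigD1 j) //= lerDl sumr_ge0 // => i _; apply: ltW.
have q_norm : `|1 - p j| < 1 by rewrite ger0_norm ?subr_ge0 // ltrBlDl ltrDr.
apply/negligibleP => //; apply/eqP; rewrite eq_le measure_ge0 andbT.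
apply/lee_addgt0Pr => e e_gt0.
have [m _ qm] : \forall m \near \oo, (1 - p j) ^+ m < e.
  by move: (cvg_expr q_norm) => /cvgr_lt /(_ e e_gt0).
by rewrite add0e (le_trans (PA_le m)) // lee_fin ltW //; apply: qm => /=.
Qed.

Lemma each_value_io_ae : {ae P, forall w, each_value_io B w}.
Proof.
(* negligible_bigcup needs nat-indexed unions; indices k > K give inord k = ord0. *)
apply: (@negligibleS _ _ _ _ (\bigcup_N \bigcup_k
    [set w | forall s, (N <= s)%N -> B s w != inord k])).
  move=> w /= /existsNP[j /existsNP[N j_never]]; exists N => //; exists (val j) => //.
  by rewrite inord_val => s Ns; apply/eqP => Bs; apply: j_never; exists s.
by do 2 apply: negligible_bigcup => ?; apply: negligible_never_after.
Qed.

End IID.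

Lemma cvg_row (R : realType) n (X : nat -> 'I_n -> R) (l : 'I_n -> R) :
  (forall k, X ^~ k @ \oo --> l k) ->
  (fun t => \row_k X t k) @ \oo --> (\row_k l k : 'rV[R]_n).
Proof.
move=> X_l; apply/cvg_mx_entourageP => A entA.
apply: filter_forall => i; apply: filter_forall => j.
have XA : \forall t \near \oo, A (l j, X t j) by move: (X_l j) => /cvg_entourageP; apply.
by rewrite near_map; apply: filterS XA => t /=; rewrite !mxE inE.
Qed.

Lemma cvg_integral_bounded d (T : measurableType d) (R : realType)
    (mu : {finite_measure set T -> \bar R}) (g_ : nat -> T -> R) (g : T -> R) (M : R) :
  (forall n, measurable_fun setT (g_ n)) -> measurable_fun setT g ->
  (forall n x, `|g_ n x| <= M) -> {ae mu, forall x, g_ ^~ x @ \oo --> g x} ->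
  (fun n => \int[mu]_x (g_ n x)%:E)%E @ \oo --> (\int[mu]_x (g x)%:E)%E.
Proof.
move=> mg_ mg g_M g_g.
have [] // := @dominated_convergence _ _ _ mu setT measurableT
  (fun n x => (g_ n x)%:E) (fun x => (g x)%:E) (cst M%:E).
- by move=> n; apply/measurable_EFinP.
- exact/measurable_EFinP.
- by apply: filterS g_g => x gx _; apply: cvg_EFin => //; apply: nearW.
- exact: finite_measure_integrable_cst.
- by apply: aeW => x n _; rewrite lee_fin.
Qed.

Theorem proposition3 (R : realType) (d : measure_display) (Omega : measurableType d)
  (P : probability Omega R) (K : nat) (hK : (1 <= K)%N)
  (p : 'I_K.+1 -> R) (hp_pos : forall j, 0 < p j) (hp_sum : \sum_(j < K.+1) p j = 1)
  (a b : 'I_K.+1 -> R -> R)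
  (hab : forall u, 0 <= u < 1 -> forall j,
     0 <= a j u /\ a j u <= a j u + b j u /\ a j u + b j u <= 1)
  (hinj : forall u, 0 <= u < 1 -> injective (fun j => (a j u, b j u)))
  (hS_rc : forall z, 0 <= z <= 1 -> forall i u, 0 <= u < 1 ->
     (fun v => a i v + b i v * z) x @[x --> u^'+] --> a i u + b i u * z)
  (hS_mono : forall z, 0 <= z <= 1 -> forall i u v, 0 <= u -> u <= v -> v < 1 ->
     a i u + b i u * z <= a i v + b i v * z)
  (th0 : R -> R)
  (hth0_range : forall u, 0 <= u < 1 -> 0 <= th0 u <= 1)
  (hth0_rc : forall u, 0 <= u < 1 -> th0 x @[x --> u^'+] --> th0 u)
  (hth0_mono : forall u v, 0 <= u -> u <= v -> v < 1 -> th0 u <= th0 v)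
  (B : nat -> Omega -> 'I_K.+1) (hB : iid_seq P B p) :
  fidi_cvg_dist P (Theta a b th0 B) (ThetaInf a b B).
Proof.
(* Monotonicity and right-continuity only make each Theta_t a CDF; convergence
   of the finite-dimensional distributions does not use them. *)
move=> n us f f_cont [M f_M].
pose fS (x : R -> R) t (v : t.-tuple 'I_K.+1) :=
  f (\row_k cdf_ext (fun u => Scomp a b v u (x u)) (us k)).
under eq_fun do rewrite (integral_Theta_prefix hB a b th0 (fun g => f (\row_k g (us k)))).
apply: (@cvg_integral_bounded _ _ _ P (fun t w => fS th0 t (prefix_tuple B t w)) _ M).
- by move=> t; apply: (measurable_fun_prefix hB).
- (* Started from 0 the forward composition converges for every w, not just
     almost surely, so the limit is an everywhere limit of measurable maps. *)
  apply: (measurable_fun_cvg (h := fun t w => fS (fun=> 0) t (prefix_tuple B t w))).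
    by move=> t; apply: (measurable_fun_prefix hB).
  move=> w _; apply: cvg_comp (cvg_row _) (f_cont _) => k.
  exact: Scomp0_prefix_cvg.
- by move=> t w; apply: f_M.
- apply: filterS (each_value_io_ae hB hp_pos hp_sum) => w w_io.
  apply: cvg_comp (cvg_row _) (f_cont _) => k.
  exact: Scomp_prefix_cvg_io.
Qed.
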